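(* Let $k$ and $n$ be positive integers and let $\ell$ be a positive divisor of $n$. Then in $\mathbb{Q}((T))$, $$\mathbf{B}^k(\ell T)\,\mathbf{B}(nT)=\ell^{k}T^{k}\,\mathbf{B}(nT)\,f^{(k)}_{\ell,n}(e^T)+\frac{n}{\ell}\,\mathbf{B}^{k+1}(\ell T)\,h^{(k)}_{\ell,n}(e^T).$$
   Context: $\mathbf{B}(T)=T/(e^T-1)\in\mathbb{Q}[[T]]$, $\mathbf{B}(cT)=cT/(e^{cT}-1)$ for $0\ne c\in\mathbb{Q}$, and $\mathbf{B}^j(cT)=(\mathbf{B}(cT))^j$. For positive integers $k,n$, the polynomials $h^{(k)}_{1,n},f^{(k)}_{1,n}\in\mathbb{Q}[X]$ are the (unique) polynomials with $\deg h^{(k)}_{1,n}<k$ and $\deg f^{(k)}_{1,n}<n-1$ such that $$\frac{1}{(X-1)^k(1+X+\cdots+X^{n-1})}=\frac{h^{(k)}_{1,n}}{(X-1)^k}+\frac{f^{(k)}_{1,n}}{1+X+\cdots+X^{n-1}}.$$ For a positive divisor $\ell$ of $n$, set $h^{(k)}_{\ell,n}=h^{(k)}_{1,n/\ell}(X^\ell)$ and $f^{(k)}_{\ell,n}=f^{(k)}_{1,n/\ell}(X^\ell)$. *)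

(* Formal power series over Q are represented as coefficient
   functions nat -> rat (coefficient of T^m). *)
From HB Require Import structures.
From mathcomp Require Import all_boot all_order all_algebra.
Set Implicit Arguments. Unset Strict Implicit. Unset Printing Implicit Defensive.
Import Order.TTheory GRing.Theory Num.Theory.
Local Open Scope ring_scope.

Definition ps := nat -> rat.

Definition ps_one : ps := fun m => (m == 0%N)%:R.
Definition ps_add (a b : ps) : ps := fun m => a m + b m.
Definition ps_scale (c : rat) (a : ps) : ps := fun m => c * a m.
Definition ps_mul (a b : ps) : ps := fun m => \sum_(i < m.+1) a i * b (m - i)%N.
Definition ps_pow (a : ps) (j : nat) : ps := iter j (ps_mul a) ps_one.
Definition ps_Tpow (k : nat) (a : ps) : ps :=
  fun m => if (k <= m)%N then a (m - k)%N else 0.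

Fixpoint ps_inv_seq (a : ps) (m : nat) : seq rat :=
  match m with
  | 0 => [:: (a 0%N)^-1]
  | m'.+1 => let s := ps_inv_seq a m' in
      rcons s (- (a 0%N)^-1 * \sum_(i < m'.+1) a i.+1 * nth 0 s (m' - i)%N)
  end.
Definition ps_inv (a : ps) : ps := fun m => nth 0 (ps_inv_seq a m) m.

Definition ps_exp (c : rat) : ps := fun m => c ^+ m / (m`!)%:R.

(* (e^{cT} - 1)/(cT) = sum_m c^m/(m+1)! T^m  (for c <> 0) *)
Definition ps_expm1_div (c : rat) : ps := fun m => c ^+ m / (m.+1`!)%:R.

(* B(cT) = cT/(e^{cT}-1) = ((e^{cT}-1)/(cT))^{-1} *)
Definition bernB (c : rat) : ps := ps_inv (ps_expm1_div c).

(* p(e^T) = sum_i p_i e^{iT} for a polynomial p *)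
Definition poly_at_exp (p : {poly rat}) : ps :=
  fun m => \sum_(i < size p) p`_i * ps_exp i%:R m.

Definition geomX (n : nat) : {poly rat} := \sum_(i < n) 'X^i.

Definition tofracP (p : {poly rat}) : {fraction {poly rat}} := FracField.tofrac p.

(* h, f are the polynomials h^{(k)}_{1,n}, f^{(k)}_{1,n}:
   deg h < k, deg f < n-1, and in Q(X)
   1/((X-1)^k (1+...+X^{n-1})) = h/(X-1)^k + f/(1+...+X^{n-1}). *)
Definition is_hf (k n : nat) (h f : {poly rat}) : Prop :=
  [/\ (size h <= k)%N, (size f <= n.-1)%N &
      (tofracP (('X - 1) ^+ k * geomX n))^-1
      = tofracP h / tofracP (('X - 1) ^+ k) + tofracP f / tofracP (geomX n)
      :> {fraction {poly rat}}].

(* Put y = e^{lT} and m = n/l, so that e^{nT} - 1 = (y - 1)(1 + y + ... + y^{m-1}).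
   Since B(cT)(e^{cT} - 1) = cT, cancelling T in the ring Q[[T]] gives
   B(nT)(1 + y + ... + y^{m-1}) = m B(lT).  Evaluating the partial fraction
   identity 1 = h (1 + ... + X^{m-1}) + f (X - 1)^k at X = y and multiplying by
   B^k(lT) B(nT), the first summand becomes m B^{k+1}(lT) h(y) and the second
   B(nT) f(y) (B(lT)(y - 1))^k = (lT)^k B(nT) f(y). *)
From HB Require Import structures.
From mathcomp Require Import all_boot all_order all_algebra.
From mathcomp Require boolp.
From mathcomp Require Import ring.
Set Implicit Arguments. Unset Strict Implicit. Unset Printing Implicit Defensive.
Import Order.TTheory GRing.Theory Num.Theory.
Local Open Scope ring_scope.

Section PartialFractionIdentity.
(* T, y, c, m, Bl, Bn play the roles of T, e^{lT}, l, n/l, B(lT), B(nT). *)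
Variables (R : comNzRingType) (T y c m Bl Bn : R).
Hypothesis Bl_expm1 : Bl * (y - 1) = T * c.

Lemma mul_geom_sum_eq (N : nat) :
  GRing.lreg (T * c) -> Bn * (y ^+ N - 1) = T * c * m ->
  Bn * \sum_(i < N) y ^+ i = m * Bl.
Proof.
move=> Tc_reg Bn_expm1; apply: Tc_reg.
transitivity (Bl * (Bn * (y ^+ N - 1))); first by rewrite -Bl_expm1 subrX1; ring.
by rewrite Bn_expm1; ring.
Qed.

Lemma bezout_mul_power (G h f : R) (k : nat) :
  Bn * G = m * Bl -> h * G + f * (y - 1) ^+ k = 1 ->
  Bl ^+ k * Bn = c ^+ k * (T ^+ k * (Bn * f)) + m * (Bl ^+ k.+1 * h).
Proof.
move=> BnG bezout.
rewrite -[LHS]mulr1 -bezout mulrDr addrC; congr (_ + _).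
  transitivity (Bn * f * (Bl * (y - 1)) ^+ k); first by rewrite exprMn; ring.
  by rewrite Bl_expm1 exprMn; ring.
transitivity (Bl ^+ k * h * (Bn * G)); first by ring.
by rewrite BnG exprSr; ring.
Qed.

End PartialFractionIdentity.

HB.instance Definition _ := boolp.gen_eqMixin ps.
HB.instance Definition _ := boolp.gen_choiceMixin ps.

Definition ps_zero : ps := fun=> 0.
Definition ps_opp (a : ps) : ps := fun m => - a m.

Lemma ps_addA : associative ps_add.
Proof. by move=> a b c; apply: boolp.funext => m; rewrite /ps_add addrA. Qed.

Lemma ps_addC : commutative ps_add.
Proof. by move=> a b; apply: boolp.funext => m; rewrite /ps_add addrC. Qed.

Lemma ps_add0 : left_id ps_zero ps_add.
Proof. by move=> a; apply: boolp.funext => m; rewrite /ps_add add0r. Qed.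

Lemma ps_addN : left_inverse ps_zero ps_opp ps_add.
Proof. by move=> a; apply: boolp.funext => m; rewrite /ps_add addNr. Qed.

HB.instance Definition _ := GRing.isZmodule.Build ps ps_addA ps_addC ps_add0 ps_addN.

Definition ps_trunc (N : nat) (a : ps) : {poly rat} := \poly_(i < N) a i.

Lemma ps_mul_trunc N a b m :
  (m < N)%N -> ps_mul a b m = (ps_trunc N a * ps_trunc N b)`_m.
Proof.
move=> ltmN; rewrite coefM; apply: eq_bigr => i _.
have ltiN : (i < N)%N by apply: leq_ltn_trans ltmN; rewrite -ltnS.
have ltmiN : (m - i < N)%N by apply: leq_ltn_trans ltmN; rewrite leq_subr.
by rewrite !coef_poly ltiN ltmiN.
Qed.

Lemma coefMl_eq (p q r : {poly rat}) m :
  (forall i, (i <= m)%N -> p`_i = q`_i) -> (p * r)`_m = (q * r)`_m.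
Proof. by move=> epq; rewrite !coefM; apply: eq_bigr => i _; rewrite epq // -ltnS. Qed.

Lemma coef_ps_trunc_mul N a b i :
  (i < N)%N -> (ps_trunc N (ps_mul a b))`_i = (ps_trunc N a * ps_trunc N b)`_i.
Proof. by move=> ltiN; rewrite coef_poly ltiN (ps_mul_trunc _ _ ltiN). Qed.

Lemma ps_mulA : associative ps_mul.
Proof.
move=> a b c; apply: boolp.funext => m.
rewrite (ps_mul_trunc (N := m.+1)) // [RHS](ps_mul_trunc (N := m.+1)) //.
rewrite mulrC [LHS](coefMl_eq _ (q := ps_trunc m.+1 b * ps_trunc m.+1 c)); last first.
  by move=> i leim; exact: coef_ps_trunc_mul.
rewrite [RHS](coefMl_eq _ (q := ps_trunc m.+1 a * ps_trunc m.+1 b)); last first.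
  by move=> i leim; exact: coef_ps_trunc_mul.
by rewrite mulrC mulrA.
Qed.

Lemma ps_mulC : commutative ps_mul.
Proof.
move=> a b; apply: boolp.funext => m.
by rewrite (ps_mul_trunc (N := m.+1)) // [RHS](ps_mul_trunc (N := m.+1)) // mulrC.
Qed.

Lemma ps_mul1 : left_id ps_one ps_mul.
Proof.
move=> a; apply: boolp.funext => m.
rewrite /ps_mul big_ord_recl /ps_one mul1r subn0 big1 ?addr0 // => i _.
by rewrite mul0r.
Qed.

Lemma ps_mulDl : left_distributive ps_mul ps_add.
Proof.
move=> a b c; apply: boolp.funext => m.
by rewrite /ps_mul /ps_add -big_split; apply: eq_bigr => i _; rewrite mulrDl.
Qed.

Lemma ps_one_neq0 : ps_one != ps_zero.
Proof.
apply/negP => /eqP /(congr1 (fun a : ps => a 0%N)) /eqP.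
by rewrite oner_eq0.
Qed.

HB.instance Definition _ := GRing.Zmodule_isComNzRing.Build ps
  ps_mulA ps_mulC ps_mul1 ps_mulDl ps_one_neq0.

Lemma coef_ps_add (a b : ps) m : (a + b) m = a m + b m. Proof. by []. Qed.
Lemma coef_ps_opp (a : ps) m : (- a) m = - a m. Proof. by []. Qed.
Lemma coef_ps_mul (a b : ps) m : (a * b) m = ps_mul a b m. Proof. by []. Qed.

Lemma ps_powE (a : ps) j : ps_pow a j = a ^+ j.
Proof. by elim: j => [|j IHj] //=; rewrite exprS -IHj. Qed.

Lemma coef_ps_sum I (r : seq I) (P : pred I) (F : I -> ps) m :
  (\sum_(i <- r | P i) F i) m = \sum_(i <- r | P i) F i m.
Proof. by elim/big_rec2: _ => // i a b _ <-. Qed.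

Lemma size_ps_inv_seq a m : size (ps_inv_seq a m) = m.+1.
Proof. by elim: m => //= m IHm; rewrite size_rcons IHm. Qed.

Lemma nth_ps_inv_seq a m i : (i <= m)%N -> nth 0 (ps_inv_seq a m) i = ps_inv a i.
Proof.
elim: m => [|m IHm]; first by rewrite leqn0 => /eqP ->.
rewrite leq_eqVlt => /predU1P[-> // | ltim].
by rewrite /= nth_rcons size_ps_inv_seq ltim IHm.
Qed.

Lemma ps_invS a m :
  ps_inv a m.+1 = - (a 0%N)^-1 * \sum_(i < m.+1) a i.+1 * ps_inv a (m - i)%N.
Proof.
rewrite /ps_inv /= nth_rcons size_ps_inv_seq ltnn eqxx; congr (_ * _).
by apply: eq_bigr => i _; rewrite nth_ps_inv_seq // leq_subr.
Qed.

Lemma ps_mulV (a : ps) : a 0%N != 0 -> a * ps_inv a = 1.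
Proof.
move=> a0_neq0; apply: boolp.funext => -[|m].
  by rewrite coef_ps_mul /ps_mul big_ord1 /ps_inv /= divff.
rewrite coef_ps_mul /ps_mul big_ord_recl subn0 ps_invS.
under [X in _ + X]eq_bigr => i _ do rewrite lift0 subSS.
by rewrite mulrA mulrN divff // mulN1r addNr.
Qed.

Definition ps_const (c : rat) : ps := ps_scale c 1.

Lemma ps_scaleE c a : ps_scale c a = ps_const c * a.
Proof.
apply: boolp.funext => m.
rewrite coef_ps_mul /ps_mul big_ord_recl big1 ?addr0.
  by rewrite /ps_const /ps_scale subn0 mulr1.
by move=> i _; rewrite /ps_const /ps_scale mulr0 mul0r.
Qed.

Lemma ps_const_is_nmod_morphism : nmod_morphism ps_const.
Proof.
split; first by apply: boolp.funext => m; rewrite /ps_const /ps_scale mul0r.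
by move=> c d; apply: boolp.funext => m; rewrite coef_ps_add /ps_const /ps_scale -mulrDl.
Qed.

Lemma ps_const_is_monoid_morphism : monoid_morphism ps_const.
Proof.
split; first by apply: boolp.funext => m; rewrite /ps_const /ps_scale mul1r.
move=> c d; rewrite -ps_scaleE; apply: boolp.funext => m.
by rewrite /ps_const /ps_scale mulrA.
Qed.

HB.instance Definition _ :=
  GRing.isNmodMorphism.Build rat ps ps_const ps_const_is_nmod_morphism.
HB.instance Definition _ :=
  GRing.isMonoidMorphism.Build rat ps ps_const ps_const_is_monoid_morphism.

Lemma ps_const_inj : injective ps_const.
Proof.
by move=> c d /(congr1 (fun a : ps => a 0%N)); rewrite /ps_const /ps_scale !mulr1.
Qed.

Definition ps_X : ps := ps_Tpow 1 1.

Lemma coef_ps_mulX (a : ps) m : (ps_X * a) m = if m is m'.+1 then a m' else 0.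
Proof.
rewrite coef_ps_mul /ps_mul; case: m => [|m].
  by rewrite big_ord1 /ps_X /ps_Tpow mul0r.
rewrite big_ord_recl big_ord_recl /ps_X /ps_Tpow /= mul0r add0r mul1r subn1.
by rewrite big1 ?addr0 // => i _; rewrite mul0r.
Qed.

Lemma ps_TpowE k (a : ps) : ps_Tpow k a = ps_X ^+ k * a.
Proof.
elim: k => [|k IHk].
  by rewrite mul1r; apply: boolp.funext => m; rewrite /ps_Tpow subn0.
rewrite exprS -mulrA -IHk; apply: boolp.funext => -[|m];
  by rewrite coef_ps_mulX /ps_Tpow ?ltn0 ?ltnS ?subSS.
Qed.

Lemma ps_X_lreg : GRing.lreg ps_X.
Proof.
move=> a b eq_Xab; apply: boolp.funext => m.
by have := congr1 (fun a : ps => a m.+1) eq_Xab; rewrite !coef_ps_mulX.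
Qed.

Lemma ps_const_lreg c : c != 0 -> GRing.lreg (ps_const c).
Proof.
move=> c_neq0 a b eq_cab.
by rewrite -[a]mul1r -[b]mul1r -(rmorph1 ps_const) -(mulVf c_neq0) rmorphM -!mulrA eq_cab.
Qed.

Lemma ps_exp0 : ps_exp 0 = 1.
Proof.
apply: boolp.funext => -[|m]; first by rewrite /ps_exp expr0 divr1.
by rewrite /ps_exp expr0n mul0r.
Qed.

Lemma ps_expD c d : ps_exp c * ps_exp d = ps_exp (c + d).
Proof.
apply: boolp.funext => m.
rewrite coef_ps_mul /ps_mul /ps_exp exprDn mulr_suml.
rewrite [RHS](reindex_inj rev_ord_inj) /=; apply: eq_bigr => i _.
have leim : (i <= m)%N by rewrite -ltnS.
rewrite subSS subKn // bin_sub //.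
have fact_neq0 j : (j`!)%:R != 0 :> rat by rewrite pnatr_eq0 -lt0n fact_gt0.
have bin_neq0 : ('C(m, i))%:R != 0 :> rat by rewrite pnatr_eq0 -lt0n bin_gt0.
rewrite -mulr_natr -(bin_fact leim) !natrM.
by field; rewrite !fact_neq0 bin_neq0.
Qed.

Lemma ps_exp_natr i : ps_exp 1 ^+ i = ps_exp i%:R.
Proof.
elim: i => [|i IHi]; first by rewrite ps_exp0.
by rewrite exprS IHi ps_expD -natr1 addrC.
Qed.

Lemma ps_expm1E c : ps_X * (ps_const c * ps_expm1_div c) = ps_exp c - 1.
Proof.
apply: boolp.funext => m; rewrite coef_ps_mulX -ps_scaleE coef_ps_add coef_ps_opp.
case: m => [|m]; first by rewrite /ps_exp expr0 divr1 subrr.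
by rewrite /ps_scale /ps_expm1_div /ps_exp exprS mulrA oppr0 addr0.
Qed.

Lemma bernB_mul_expm1 c : bernB c * (ps_exp c - 1) = ps_X * ps_const c.
Proof.
have bernB_mulV : ps_expm1_div c * bernB c = 1.
  by apply: ps_mulV; rewrite /ps_expm1_div expr0 mul1r.
rewrite -ps_expm1E -[RHS]mulr1 -bernB_mulV; ring.
Qed.

Lemma poly_at_expE p : poly_at_exp p = (map_poly ps_const p).[ps_exp 1].
Proof.
rewrite horner_coef size_map_inj_poly ?rmorph0 //; last exact: ps_const_inj.
apply: boolp.funext => m; rewrite coef_ps_sum; apply: eq_bigr => i _.
by rewrite coef_map ps_exp_natr -ps_scaleE.
Qed.

Lemma poly_at_exp_comp_Xn p l :
  poly_at_exp (p \Po 'X^l) = (map_poly ps_const p).[ps_exp l%:R].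
Proof.
by rewrite poly_at_expE map_comp_poly map_polyXn horner_comp hornerXn ps_exp_natr.
Qed.

Lemma geomX_neq0 m : (0 < m)%N -> geomX m != 0.
Proof.
move=> m_gt0; apply: contraTneq m_gt0 => /(congr1 (horner^~ 1)).
rewrite horner0 /geomX horner_sum.
under eq_bigr do rewrite hornerXn expr1n.
by rewrite sumr_const card_ord => /eqP; rewrite pnatr_eq0 => /eqP ->.
Qed.

Lemma partial_fraction_bezout (F : fieldType) (p g a b : F) :
  p != 0 -> g != 0 -> (p * g)^-1 = a / p + b / g -> a * g + b * p = 1.
Proof.
move=> p_neq0 g_neq0 eq_pg; rewrite -(mulVf (mulf_neq0 p_neq0 g_neq0)) eq_pg.
by field; rewrite g_neq0 p_neq0.
Qed.

Lemma is_hf_bezout k m h f :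
  (0 < m)%N -> is_hf k m h f -> h * geomX m + f * ('X - 1) ^+ k = 1.
Proof.
move=> m_gt0 [_ _]; rewrite /tofracP tofracM.
have P_neq0 : FracField.tofrac (('X - 1) ^+ k : {poly rat}) != 0.
  by rewrite tofrac_eq0 expf_neq0 // -polyC1 polyXsubC_eq0.
have G_neq0 : FracField.tofrac (geomX m) != 0 by rewrite tofrac_eq0 geomX_neq0.
move=> /(partial_fraction_bezout P_neq0 G_neq0) eq_frac.
by apply/eqP; rewrite -tofrac_eq tofrac1 tofracD !tofracM eq_frac.
Qed.

Theorem mainTheorem5 (k n l : nat) (h f : {poly rat}) :
  (0 < k)%N -> (0 < n)%N -> (0 < l)%N -> (l %| n)%N ->
  is_hf k (n %/ l) h f ->
  ps_mul (ps_pow (bernB l%:R) k) (bernB n%:R)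
  =1 ps_add
       (ps_scale (l%:R ^+ k)
          (ps_Tpow k (ps_mul (bernB n%:R) (poly_at_exp (f \Po 'X^l)))))
       (ps_scale ((n %/ l)%:R)
          (ps_mul (ps_pow (bernB l%:R) k.+1) (poly_at_exp (h \Po 'X^l)))).
Proof.
move=> _ n_gt0 l_gt0 l_dvd_n hf x; congr (_ x).
set m := (n %/ l)%N.
have m_gt0 : (0 < m)%N by rewrite divn_gt0 // dvdn_leq.
have n_eq : n = (l * m)%N by rewrite mulnC divnK.
rewrite !ps_scaleE ps_TpowE !ps_powE !poly_at_exp_comp_Xn rmorphXn.
set y := ps_exp l%:R.
have geom_y : (map_poly ps_const (geomX m)).[y] = \sum_(i < m) y ^+ i.
  rewrite /geomX rmorph_sum horner_sum; apply: eq_bigr => i _.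
  by rewrite /= map_polyXn hornerXn.
have Bl_expm1 := bernB_mul_expm1 l%:R.
apply: (bezout_mul_power Bl_expm1 (G := \sum_(i < m) y ^+ i)).
- apply: (mul_geom_sum_eq Bl_expm1).
    by apply: lregM ps_X_lreg (ps_const_lreg _); rewrite pnatr_eq0 -lt0n.
  rewrite /y -ps_exp_natr -exprM -n_eq ps_exp_natr bernB_mul_expm1.
  by rewrite n_eq natrM rmorphM mulrA.
- rewrite -geom_y.
  have := congr1 (fun p => (map_poly ps_const p).[y]) (is_hf_bezout m_gt0 hf).
  by rewrite rmorphD !rmorphM rmorphXn rmorphB /= map_polyX rmorph1 !hornerE.
Qed.
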